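(* Let $L_f>8\alpha>0$ and $\epsilon>0$ be given. There exists an infinite-dimensional smooth problem of the form described in the context with aggregate smoothness constant $L_f$ and with $u$ having strong convexity modulus $\alpha$, such that any DPM algorithm requires at least $\Omega(\sqrt{L_f/\alpha}\log(1/\epsilon))$ communication rounds to find an $\epsilon$-close solution, i.e. a point $x$ with $\|x-x^*\|^2\le\epsilon$ (the dependence on $R_0\ge\|x^0-x^*\|$ inside the logarithm being ignored).
   Context: Problem form: $\min_{x\in X}\{f(x):=\max_{p\in P}\sum_{i=1}^mp_if_i(x)-\rho^*(p)+u(x)\}$ with $X$ a closed convex subset of the (possibly infinite-dimensional) Euclidean space of variables, $P\subseteq\{p\in\mathbb{R}^m:\sum_ip_i=1,p\ge0\}$ closed convex, $\rho^*$, $u$ proper closed convex, and $f_i(x)=\max_{\pi_i\in\Pi_i}\langle A_ix,\pi_i\rangle-f_i^*(\pi_i)$; smooth means $A_i=I$, $f_i$ convex with Lipschitz gradient and $f_i^*$ its conjugate. $x^*$ is the optimal solution. The aggregate smoothness constant is $\max_{p\in P}L_p$, where $L_p$ is the Lipschitz constant of $\nabla\sum_ip_if_i$. $x^0=0$. A DPM algorithm on a star network (server plus workers, worker $i$ knowing only $f_i$, server knowing $u$, $\rho^*$, $P$) maintains a server memory and, for each worker, primal and dual memories, all $\{0\}$ initially. In each communication round each worker sends one vector from the span of its primal memory to the server and receives one vector from the span of the server memory; between rounds each worker may, any finite number of times, pick $\bar x$ in the span of its primal memory, $\bar\pi_i$ in the span of its dual memory, $\tau\ge0$, compute $\pi_i'\in\arg\max_{\pi_i\in\Pi_i}\langle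 A_i\bar x,\pi_i\rangle-f_i^*(\pi_i)-\frac\tau2\|\pi_i-\bar\pi_i\|^2$, add $A_i^\top\pi_i',A_i^\top\bar\pi_i$ to its primal memory and $\pi_i',A_i\bar x$ to its dual memory; the server may, any finite number of times, add $\arg\min_{x\in X}u(x)+\frac\eta2\|x-\bar x\|^2$ for $\bar x$ in the span of its memory and $\eta>0$. The output after $t$ rounds lies in the span of all primal memories and the server memory. $\Omega$ hides absolute constants. *)

From Stdlib Require Import Reals List.
From Coquelicot Require Import Coquelicot.
Open Scope R_scope.

Definition vec := nat -> R.
Definition vzero : vec := fun _ => 0.
Definition vadd (x y : vec) : vec := fun k => x k + y k.
Definition vsub (x y : vec) : vec := fun k => x k - y k.
Definition vcomb (l : R) (x y : vec) : vec := fun k => l * x k + (1 - l) * y k.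

Definition is_l2 (x : vec) : Prop := ex_series (fun k => x k ^ 2).
Definition l2inner (x y : vec) : R := Series (fun k => x k * y k).
Definition l2norm2 (x : vec) : R := Series (fun k => x k ^ 2).
Definition l2norm (x : vec) : R := sqrt (l2norm2 x).

Fixpoint sumR (m : nat) (a : nat -> R) : R :=
  match m with O => 0 | S n => sumR n a + a n end.

Definition lincomb (l : list (R * vec)) : vec :=
  fold_right (fun p acc => fun k => fst p * snd p k + acc k) vzero l.
Definition in_span (M : vec -> Prop) (v : vec) : Prop :=
  exists l : list (R * vec), (forall p, In p l -> M (snd p)) /\
                             forall k, v k = lincomb l k.

Definition l2_set_closed (X : vec -> Prop) : Prop :=
  forall (xs : nat -> vec) (x : vec), (forall n, X (xs n)) -> is_l2 x ->
    is_lim_seq (fun n => l2norm2 (vsub (xs n) x)) 0 -> X x.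
Definition l2_set_convex (X : vec -> Prop) : Prop :=
  forall x y l, X x -> X y -> 0 <= l <= 1 -> X (vcomb l x y).

Definition proper_l2 (u : vec -> Rbar) : Prop :=
  (forall x, is_l2 x -> u x <> m_infty) /\ exists x, is_l2 x /\ is_finite (u x).
Definition closed_l2 (u : vec -> Rbar) : Prop :=
  forall (xs : nat -> vec) x (rs : nat -> R) r,
    (forall n, is_l2 (xs n)) -> is_l2 x ->
    is_lim_seq (fun n => l2norm2 (vsub (xs n) x)) 0 -> is_lim_seq rs r ->
    (forall n, Rbar_le (u (xs n)) (Finite (rs n))) -> Rbar_le (u x) (Finite r).
Definition strongly_convex_l2 (u : vec -> Rbar) (a : R) : Prop :=
  forall x y l, is_l2 x -> is_l2 y -> 0 < l < 1 ->
    Rbar_le (u (vcomb l x y))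
      (Rbar_plus (Rbar_plus (Rbar_mult l (u x)) (Rbar_mult (1 - l) (u y)))
                 (Finite (- (a / 2) * l * (1 - l) * l2norm2 (vsub x y)))).
Definition convex_l2 (u : vec -> Rbar) : Prop := strongly_convex_l2 u 0.
Definition strong_convexity_modulus (u : vec -> Rbar) (a : R) : Prop :=
  strongly_convex_l2 u a /\ forall a', a < a' -> ~ strongly_convex_l2 u a'.

Definition convex_fun_l2 (f : vec -> R) : Prop :=
  forall x y l, is_l2 x -> is_l2 y -> 0 <= l <= 1 ->
    f (vcomb l x y) <= l * f x + (1 - l) * f y.
Definition is_gradient_l2 (f : vec -> R) (g : vec -> vec) : Prop :=
  forall x, is_l2 x -> is_l2 (g x) /\
    forall e, 0 < e -> exists d, 0 < d /\ forall h, is_l2 h -> l2norm h < d ->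
      Rabs (f (vadd x h) - f x - l2inner (g x) h) <= e * l2norm h.
Definition lipschitz_l2 (G : vec -> vec) (L : R) : Prop :=
  forall x y, is_l2 x -> is_l2 y ->
    l2norm (vsub (G x) (G y)) <= L * l2norm (vsub x y).
Definition fconj (f : vec -> R) (pi : vec) : Rbar :=
  Lub_Rbar (fun r => exists x, is_l2 x /\ r = l2inner x pi - f x).

(** * Finite-dimensional part: R^m, represented by sequences vanishing from m on *)
Definition in_Rm (m : nat) (p : vec) : Prop := forall k, (m <= k)%nat -> p k = 0.
Definition in_simplex (m : nat) (p : vec) : Prop :=
  in_Rm m p /\ (forall i, (i < m)%nat -> 0 <= p i) /\ sumR m p = 1.
Definition Rm_set_closed (m : nat) (P : vec -> Prop) : Prop :=
  forall (ps : nat -> vec) p, (forall n, P (ps n)) -> in_Rm m p ->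
    (forall i, is_lim_seq (fun n => ps n i) (p i)) -> P p.
Definition Rm_set_convex (m : nat) (P : vec -> Prop) : Prop :=
  forall p q l, P p -> P q -> 0 <= l <= 1 -> P (vcomb l p q).
Definition proper_Rm (m : nat) (rho : vec -> Rbar) : Prop :=
  (forall p, in_Rm m p -> rho p <> m_infty) /\ exists p, in_Rm m p /\ is_finite (rho p).
Definition closed_Rm (m : nat) (rho : vec -> Rbar) : Prop :=
  forall (ps : nat -> vec) p (rs : nat -> R) r,
    (forall n, in_Rm m (ps n)) -> in_Rm m p ->
    (forall i, is_lim_seq (fun n => ps n i) (p i)) -> is_lim_seq rs r ->
    (forall n, Rbar_le (rho (ps n)) (Finite (rs n))) -> Rbar_le (rho p) (Finite r).
Definition convex_Rm (m : nat) (rho : vec -> Rbar) : Prop :=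
  forall p q l, in_Rm m p -> in_Rm m q -> 0 < l < 1 ->
    Rbar_le (rho (vcomb l p q))
            (Rbar_plus (Rbar_mult l (rho p)) (Rbar_mult (1 - l) (rho q))).

(** * The smooth problem
   min_{x in X} max_{p in P} sum_i p_i f_i(x) - rho^*(p) + u(x),
   with A_i = I, Pi_i = l^2, f_i convex with Lipschitz gradient g_i. *)
Definition smooth_problem (m : nat) (P : vec -> Prop) (rho : vec -> Rbar)
    (X : vec -> Prop) (u : vec -> Rbar) (f : nat -> vec -> R) (g : nat -> vec -> vec) : Prop :=
  (forall p, P p -> in_simplex m p) /\ Rm_set_closed m P /\ Rm_set_convex m P /\
  proper_Rm m rho /\ closed_Rm m rho /\ convex_Rm m rho /\
  (forall x, X x -> is_l2 x) /\ l2_set_closed X /\ l2_set_convex X /\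
  proper_l2 u /\ closed_l2 u /\ convex_l2 u /\
  (forall i, (i < m)%nat ->
     convex_fun_l2 (f i) /\ is_gradient_l2 (f i) (g i) /\ exists L, lipschitz_l2 (g i) L).

Definition agg_grad (m : nat) (g : nat -> vec -> vec) (p : vec) : vec -> vec :=
  fun x k => sumR m (fun i => p i * g i x k).

Definition aggregate_smoothness (m : nat) (P : vec -> Prop) (g : nat -> vec -> vec)
    (Lf : R) : Prop :=
  (forall p, P p -> lipschitz_l2 (agg_grad m g p) Lf) /\
  exists p, P p /\ forall L', L' < Lf -> ~ lipschitz_l2 (agg_grad m g p) L'.

Definition objective (m : nat) (P : vec -> Prop) (rho : vec -> Rbar) (u : vec -> Rbar)
    (f : nat -> vec -> R) (x : vec) : Rbar :=
  Rbar_plus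
    (Lub_Rbar (fun r => exists p r', P p /\ rho p = Finite r' /\
                                     r = sumR m (fun i => p i * f i x) - r'))
    (u x).

Definition optimal_solution (m : nat) (P : vec -> Prop) (rho : vec -> Rbar)
    (X : vec -> Prop) (u : vec -> Rbar) (f : nat -> vec -> R) (xs : vec) : Prop :=
  X xs /\ is_finite (objective m P rho u f xs) /\
  forall y, X y -> Rbar_le (objective m P rho u f xs) (objective m P rho u f y).

Record dpm_state := mkState {
  srv  : vec -> Prop;
  pmem : nat -> vec -> Prop;
  dmem : nat -> vec -> Prop }.

Definition init_state : dpm_state :=
  mkState (fun y => y = vzero) (fun _ y => y = vzero) (fun _ y => y = vzero).

Definition dual_obj (fi : vec -> R) (xb pb : vec) (tau : R) (q : vec) : Rbar :=
  Rbar_minus (Finite (l2inner xb q - tau / 2 * l2norm2 (vsub q pb))) (fconj fi q).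
Definition dual_argmax (fi : vec -> R) (xb pb : vec) (tau : R) (p' : vec) : Prop :=
  is_l2 p' /\ is_finite (fconj fi p') /\
  forall q, is_l2 q -> Rbar_le (dual_obj fi xb pb tau q) (dual_obj fi xb pb tau p').

Definition prox_argmin (X : vec -> Prop) (u : vec -> Rbar) (eta : R) (xb x' : vec) : Prop :=
  X x' /\ is_finite (u x') /\
  forall y, X y ->
    Rbar_le (Rbar_plus (u x') (Finite (eta / 2 * l2norm2 (vsub x' xb))))
            (Rbar_plus (u y) (Finite (eta / 2 * l2norm2 (vsub y xb)))).

Definition worker_step (m : nat) (f : nat -> vec -> R) (s s' : dpm_state) : Prop :=
  exists i xb pb tau p', (i < m)%nat /\
    in_span (pmem s i) xb /\ in_span (dmem s i) pb /\ 0 <= tau /\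
    dual_argmax (f i) xb pb tau p' /\
    s' = mkState (srv s)
           (fun j y => pmem s j y \/ (j = i /\ (y = p' \/ y = pb)))
           (fun j y => dmem s j y \/ (j = i /\ (y = p' \/ y = xb))).

Definition server_step (X : vec -> Prop) (u : vec -> Rbar) (s s' : dpm_state) : Prop :=
  exists xb eta x', in_span (srv s) xb /\ 0 < eta /\ prox_argmin X u eta xb x' /\
    s' = mkState (fun y => srv s y \/ y = x') (pmem s) (dmem s).

(** one communication round: every worker i uploads v i from the span of its primal
    memory; then every worker downloads w i from the span of the server memory
    (which already contains the uploads of this round). *)
Definition comm_step (m : nat) (s s' : dpm_state) : Prop :=
  exists v w : nat -> vec,
    (forall i, (i < m)%nat -> in_span (pmem s i) (v i)) /\
    (forall i, (i < m)%nat ->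
       in_span (fun y => srv s y \/ exists j, (j < m)%nat /\ y = v j) (w i)) /\
    s' = mkState (fun y => srv s y \/ exists j, (j < m)%nat /\ y = v j)
                 (fun j y => pmem s j y \/ ((j < m)%nat /\ y = w j))
                 (dmem s).

Inductive reach (m : nat) (X : vec -> Prop) (u : vec -> Rbar) (f : nat -> vec -> R)
  : nat -> dpm_state -> Prop :=
| reach_init : reach m X u f 0 init_state
| reach_worker : forall t s s', reach m X u f t s -> worker_step m f s s' -> reach m X u f t s'
| reach_server : forall t s s', reach m X u f t s -> server_step X u s s' -> reach m X u f t s'
| reach_comm : forall t s s', reach m X u f t s -> comm_step m s s' -> reach m X u f (S t) s'.

Definition dpm_output (m : nat) (X : vec -> Prop) (u : vec -> Rbar) (f : nat -> vec -> R)
    (t : nat) (x : vec) : Prop :=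
  exists s, reach m X u f t s /\
    in_span (fun y => srv s y \/ exists i, (i < m)%nat /\ pmem s i y) x.

(* Lower bound by a zero chain split between two workers.  On the path 0 - 1 - ... - N the
   quadratic sum_k beta (x_k - x_(k+1))^2 / 2 is shared out: worker 0 owns the even edges
   (k, k+1) and the linear term in x_0, worker 1 the odd edges, while the server's regularizer
   (alpha/2) |x|^2 + (delta/2) x_(N-1)^2 is separable.  The server's proximal step keeps vectors
   supported on [0, n) inside [0, n), and so does a worker's dual oracle unless the worker owns
   the edge (n-1, n); hence each communication round extends the support of everything anyone
   knows by at most one coordinate, and after t rounds every output lies in R^(t+2).  The minimizer is
   geometric, x*_k = q^(k-2) with 1 - q = (5/2) sqrt(alpha/L_f), so an output x satisfies
   |x - x*|^2 >= x*_(t+2)^2 = q^(2t), which forces t >= sqrt(L_f/alpha) ln(1/eps) / 50.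
   An extra coordinate N of curvature L_f, decoupled from the chain, makes the aggregate
   smoothness constant exactly L_f. *)

From Stdlib Require Import Reals List.
From Coquelicot Require Import Coquelicot.
From Stdlib Require Import Lra Lia ClassicalEpsilon Classical FunctionalExtensionality.
Open Scope R_scope.

(** * Finite sums *)

Lemma sumR_ext M a b : (forall k, (k < M)%nat -> a k = b k) -> sumR M a = sumR M b.
Proof.
  induction M as [|M IH]; intros H; simpl; [reflexivity|].
  rewrite IH, H; auto with arith.
Qed.

Lemma sumR_le M a b : (forall k, (k < M)%nat -> a k <= b k) -> sumR M a <= sumR M b.
Proof.
  induction M as [|M IH]; intros H; simpl; [lra|].
  apply Rplus_le_compat; auto with arith.
Qed.

Lemma sumR_lt M a b k0 : (forall k, (k < M)%nat -> a k <= b k) -> (k0 < M)%nat -> a k0 < b k0 ->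
  sumR M a < sumR M b.
Proof.
  induction M as [|M IH]; intros H Hk Hlt; simpl; [lia|].
  destruct (Nat.eq_dec k0 M) as [->|Hne].
  - apply Rplus_le_lt_compat; auto. apply sumR_le; auto with arith.
  - apply Rplus_lt_le_compat; [apply IH|]; auto with arith; lia.
Qed.

Lemma sumR_S M a : sumR (S M) a = sumR M a + a M.
Proof. reflexivity. Qed.

Lemma sumR_plus M a b : sumR M (fun k => a k + b k) = sumR M a + sumR M b.
Proof. induction M as [|M IH]; simpl; [lra|]. rewrite IH; lra. Qed.

Lemma sumR_minus M a b : sumR M (fun k => a k - b k) = sumR M a - sumR M b.
Proof. induction M as [|M IH]; simpl; [lra|]. rewrite IH; lra. Qed.

Lemma sumR_scal M c a : sumR M (fun k => c * a k) = c * sumR M a.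
Proof. induction M as [|M IH]; simpl; [lra|]. rewrite IH; lra. Qed.

Lemma sumR_const M c : sumR M (fun _ => c) = INR M * c.
Proof. induction M as [|M IH]; [simpl; ring|]. rewrite S_INR. simpl. rewrite IH. ring. Qed.

Lemma sumR_nonneg M a : (forall k, (k < M)%nat -> 0 <= a k) -> 0 <= sumR M a.
Proof. intros H. replace 0 with (sumR M (fun _ => 0)) by (rewrite sumR_const; ring). now apply sumR_le. Qed.

Lemma sumR_term_le M a k : (forall i, (i < M)%nat -> 0 <= a i) -> (k < M)%nat -> a k <= sumR M a.
Proof.
  induction M as [|M IH]; intros H Hk; simpl; [lia|].
  destruct (Nat.eq_dec k M) as [->|Hne].
  - pose proof (sumR_nonneg M a ltac:(auto with arith)). lra.
  - pose proof (H M ltac:(lia)). pose proof (IH ltac:(auto with arith) ltac:(lia)). lra.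
Qed.

Lemma sumR_extend M M' a : (forall k, (M <= k)%nat -> a k = 0) -> (M <= M')%nat -> sumR M' a = sumR M a.
Proof. intros H Hle. induction Hle as [|M' HM IH]; [reflexivity|]. simpl. rewrite IH, H by lia. ring. Qed.

Lemma sumR_succ_l M a : sumR (S M) a = a O + sumR M (fun k => a (S k)).
Proof. induction M as [|M IH]; [simpl; ring|]. rewrite sumR_S, IH. simpl. ring. Qed.

Lemma sumR_delta M k c : sumR M (fun i => if Nat.eqb i k then c else 0) = if Nat.ltb k M then c else 0.
Proof.
  induction M as [|M IH]; [reflexivity|]. simpl. rewrite IH.
  destruct (Nat.eqb_spec M k) as [->|Hne].
  - replace (Nat.ltb k k) with false by (symmetry; apply Nat.ltb_irrefl).
    replace (Nat.ltb k (S k)) with true by (symmetry; apply Nat.ltb_lt; lia). ring.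
  - destruct (Nat.ltb_spec k M), (Nat.ltb_spec k (S M)); try lia; ring.
Qed.

Lemma is_lim_seq_sumR M (a : nat -> nat -> R) (l : nat -> R) :
  (forall k, (k < M)%nat -> is_lim_seq (fun n => a n k) (l k)) ->
  is_lim_seq (fun n => sumR M (a n)) (sumR M l).
Proof.
  induction M as [|M IH]; intros H; simpl; [apply is_lim_seq_const|].
  apply is_lim_seq_plus'; auto with arith.
Qed.

Definition backshift (a : nat -> R) (k : nat) : R := match k with O => 0 | S k' => a k' end.

Lemma sumR_by_parts M a h : sumR M (fun k => a k * h k - backshift a k * h k) =
  sumR M (fun k => a k * (h k - h (S k))) + backshift a M * h M.
Proof. induction M as [|M IH]; simpl; [lra|]. rewrite IH. destruct M; simpl; ring. Qed.

Lemma sumR_weighted_diff_sq M w W v : (forall k, 0 <= w k <= W) ->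
  sumR M (fun k => (w k * (v k - v (S k))) ^ 2) <= 4 * W ^ 2 * sumR (S M) (fun k => v k ^ 2).
Proof.
  intros Hw.
  assert (Hterm : forall k, (w k * (v k - v (S k))) ^ 2 <= 2 * W ^ 2 * v k ^ 2 + 2 * W ^ 2 * v (S k) ^ 2).
  { intros k. destruct (Hw k). pose proof (pow2_ge_0 (v k + v (S k))).
    assert (w k ^ 2 <= W ^ 2) by nra. pose proof (pow2_ge_0 (v k - v (S k))).
    assert ((v k - v (S k)) ^ 2 <= 2 * v k ^ 2 + 2 * v (S k) ^ 2) by nra.
    replace ((w k * (v k - v (S k))) ^ 2) with (w k ^ 2 * (v k - v (S k)) ^ 2) by ring. nra. }
  eapply Rle_trans; [apply sumR_le; intros k _; apply Hterm|].
  rewrite sumR_plus, !sumR_scal.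
  assert (H0 : sumR M (fun k => v k ^ 2) <= sumR (S M) (fun k => v k ^ 2)).
  { simpl. pose proof (pow2_ge_0 (v M)). lra. }
  assert (H1 : sumR M (fun k => v (S k) ^ 2) <= sumR (S M) (fun k => v k ^ 2)).
  { rewrite (sumR_succ_l M (fun k => v k ^ 2)). pose proof (pow2_ge_0 (v O)). lra. }
  pose proof (pow2_ge_0 W). nra.
Qed.

(** * Finitely supported vectors in l^2 *)

Lemma sum_n_sumR a n : sum_n a n = sumR (S n) a.
Proof.
  induction n as [|n IH]; [simpl; rewrite sum_O; lra|].
  rewrite sum_Sn, IH. reflexivity.
Qed.

Lemma is_series_supported M a : (forall k, (M <= k)%nat -> a k = 0) -> is_series a (sumR M a).
Proof.
  intros H. apply (filterlim_ext_loc (fun _ => sumR M a)); [|apply filterlim_const].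
  exists M. intros n Hn. rewrite sum_n_sumR. symmetry. apply sumR_extend; auto.
Qed.

Lemma Series_supported M a : (forall k, (M <= k)%nat -> a k = 0) -> Series a = sumR M a.
Proof. intros H. now apply is_series_unique, is_series_supported. Qed.

Lemma in_Rm_le n n' x : (n <= n')%nat -> in_Rm n x -> in_Rm n' x.
Proof. intros H Hx k Hk. apply Hx. lia. Qed.

Lemma in_Rm_is_l2 M x : in_Rm M x -> is_l2 x.
Proof. intros H. eexists. apply (is_series_supported M). intros k Hk. rewrite H; auto. ring. Qed.

Lemma l2norm2_in_Rm M x : in_Rm M x -> l2norm2 x = sumR M (fun k => x k ^ 2).
Proof. intros H. apply Series_supported. intros k Hk. rewrite H; auto. ring. Qed.

Lemma l2inner_in_Rm_l M x y : in_Rm M x -> l2inner x y = sumR M (fun k => x k * y k).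
Proof. intros H. apply Series_supported. intros k Hk. rewrite H; auto. ring. Qed.

Lemma l2inner_in_Rm_r M x y : in_Rm M y -> l2inner x y = sumR M (fun k => x k * y k).
Proof. intros H. apply Series_supported. intros k Hk. rewrite H; auto. ring. Qed.

Lemma in_Rm_vsub M x y : in_Rm M x -> in_Rm M y -> in_Rm M (vsub x y).
Proof. intros Hx Hy k Hk. unfold vsub. rewrite Hx, Hy; auto. ring. Qed.

Lemma in_Rm_span n (M : vec -> Prop) v : (forall y, M y -> in_Rm n y) -> in_span M v -> in_Rm n v.
Proof.
  intros HM [l [Hl Hv]] k Hk. rewrite Hv. clear Hv.
  induction l as [|[c y] l IH]; simpl; [reflexivity|].
  assert (Hy : y k = 0) by (apply (HM y); [apply (Hl (c, y)); now left|lia]).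
  rewrite Hy, IH; [ring|]. intros p Hp. apply Hl. now right.
Qed.

Lemma is_l2_vsub x y : is_l2 x -> is_l2 y -> is_l2 (vsub x y).
Proof.
  unfold is_l2, vsub. intros Hx Hy.
  apply (@ex_series_le R_AbsRing R_CompleteNormedModule _ (fun k => 2 * x k ^ 2 + 2 * y k ^ 2)).
  - intros k. change norm with Rabs. rewrite Rabs_pos_eq by apply pow2_ge_0.
    pose proof (pow2_ge_0 (x k + y k)). nra.
  - exact (ex_series_plus _ _ (ex_series_scal_l 2 _ Hx) (ex_series_scal_l 2 _ Hy)).
Qed.

Lemma sumR_sq_le_l2norm2 M x : is_l2 x -> sumR M (fun k => x k ^ 2) <= l2norm2 x.
Proof.
  intros H. set (y k := if Nat.ltb k M then x k ^ 2 else 0).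
  rewrite (sumR_ext _ _ y), <- (Series_supported M y).
  - apply Series_le; auto. intros k. unfold y. pose proof (pow2_ge_0 (x k)).
    destruct (Nat.ltb k M); lra.
  - intros k Hk. unfold y. destruct (Nat.ltb_spec k M); [lia|reflexivity].
  - intros k Hk. unfold y. destruct (Nat.ltb_spec k M); [reflexivity|lia].
Qed.

Lemma l2norm2_nonneg x : is_l2 x -> 0 <= l2norm2 x.
Proof. exact (sumR_sq_le_l2norm2 0 x). Qed.

Lemma coord_sq_le_l2norm2 x k : is_l2 x -> x k ^ 2 <= l2norm2 x.
Proof.
  intros H. eapply Rle_trans; [|apply (sumR_sq_le_l2norm2 (S k)); auto].
  apply (sumR_term_le (S k) (fun k => x k ^ 2)); [intros; apply pow2_ge_0|lia].
Qed.

Lemma is_lim_seq_coord (xs : nat -> vec) x k :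
  (forall n, is_l2 (vsub (xs n) x)) -> is_lim_seq (fun n => l2norm2 (vsub (xs n) x)) 0 ->
  is_lim_seq (fun n => xs n k) (x k).
Proof.
  intros Hl H. apply is_lim_seq_spec. apply is_lim_seq_spec in H. intros e.
  assert (He : 0 < e * e) by (pose proof (cond_pos e); nra).
  destruct (H (mkposreal _ He)) as [N HN]. exists N. intros n Hn. specialize (HN n Hn). simpl in HN.
  pose proof (coord_sq_le_l2norm2 _ k (Hl n)) as Hk.
  change (vsub (xs n) x k) with (xs n k - x k) in Hk.
  rewrite Rminus_0_r, Rabs_pos_eq in HN by (apply l2norm2_nonneg; auto).
  rewrite <- (Rabs_pos_eq e) by (pose proof (cond_pos e); lra).
  apply Rsqr_lt_abs_0. unfold Rsqr. simpl in Hk. lra.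
Qed.

Lemma is_lim_seq_sq (u : nat -> R) (l : R) : is_lim_seq u l -> is_lim_seq (fun n => u n ^ 2) (l ^ 2).
Proof.
  intros H. apply (is_lim_seq_ext (fun n => u n * u n)); [intros; ring|].
  replace (l ^ 2) with (l * l) by ring. now apply is_lim_seq_mult'.
Qed.

Definition trunc (n : nat) (x : vec) : vec := fun k => if Nat.ltb k n then x k else 0.

Lemma trunc_in_Rm n x : in_Rm n (trunc n x).
Proof. intros k Hk. unfold trunc. destruct (Nat.ltb_spec k n); [lia|reflexivity]. Qed.

Lemma trunc_lt n x k : (k < n)%nat -> trunc n x k = x k.
Proof. intros Hk. unfold trunc. destruct (Nat.ltb_spec k n); [reflexivity|lia]. Qed.

Lemma trunc_ge n x k : (n <= k)%nat -> trunc n x k = 0.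
Proof. intros Hk. apply trunc_in_Rm; auto. Qed.

Lemma l2inner_trunc_r n x p : in_Rm n x -> l2inner x (trunc n p) = l2inner x p.
Proof.
  intros Hx. rewrite !(l2inner_in_Rm_l n) by exact Hx.
  apply sumR_ext. intros k Hk. now rewrite trunc_lt.
Qed.

Lemma l2norm2_trunc_le n x : is_l2 x -> l2norm2 (trunc n x) <= l2norm2 x.
Proof.
  intros Hx. rewrite (l2norm2_in_Rm n) by apply trunc_in_Rm.
  rewrite (sumR_ext _ _ (fun k => x k ^ 2)) by (intros k Hk; now rewrite trunc_lt).
  now apply sumR_sq_le_l2norm2.
Qed.

Lemma trunc_vsub n x y : in_Rm n y -> vsub (trunc n x) y = trunc n (vsub x y).
Proof.
  intros Hy. apply functional_extensionality. intros k. unfold vsub, trunc.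
  destruct (Nat.ltb_spec k n); [reflexivity|]. rewrite Hy by lia. ring.
Qed.

Definition basis (n : nat) : vec := fun k => if Nat.eqb k n then 1 else 0.

Lemma in_Rm_scal_basis n c : in_Rm (S n) (fun k => c * basis n k).
Proof. intros k Hk. unfold basis. destruct (Nat.eqb_spec k n); [lia|ring]. Qed.

Lemma sumR_scal_basis M n c (a : vec) :
  sumR M (fun k => c * basis n k * a k) = if Nat.ltb n M then c * a n else 0.
Proof.
  rewrite <- sumR_delta. apply sumR_ext. intros k _. unfold basis.
  destruct (Nat.eqb_spec k n) as [->|]; ring.
Qed.

Lemma l2norm2_scal_basis n c : l2norm2 (fun k => c * basis n k) = c ^ 2.
Proof.
  rewrite (l2norm2_in_Rm (S n)) by apply in_Rm_scal_basis.
  rewrite (sumR_ext _ _ (fun k => c * basis n k * (c * basis n k))) by (intros; ring).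
  rewrite sumR_scal_basis. replace (Nat.ltb n (S n)) with true by (symmetry; apply Nat.ltb_lt; lia).
  unfold basis. rewrite Nat.eqb_refl. ring.
Qed.

Lemma l2inner_scal_basis_l n c p : l2inner (fun k => c * basis n k) p = c * p n.
Proof.
  rewrite (l2inner_in_Rm_l (S n)) by apply in_Rm_scal_basis.
  rewrite sumR_scal_basis. now replace (Nat.ltb n (S n)) with true by (symmetry; apply Nat.ltb_lt; lia).
Qed.

Lemma l2inner_vadd_l M x y p : in_Rm M x -> in_Rm M y ->
  l2inner (vadd x y) p = l2inner x p + l2inner y p.
Proof.
  intros Hx Hy. rewrite !(l2inner_in_Rm_l M), <- sumR_plus; auto.
  - apply sumR_ext. intros. unfold vadd. ring.
  - intros k Hk. unfold vadd. rewrite Hx, Hy; auto. ring.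
Qed.

(** * Conjugates, closed convex sets and functions *)

Lemma fconj_ge (f : vec -> R) p x : is_l2 x -> Rbar_le (Finite (l2inner x p - f x)) (fconj f p).
Proof. intros Hx. apply (proj1 (Lub_Rbar_correct _)). now exists x. Qed.

Lemma fconj_le (f : vec -> R) p B :
  (forall x, is_l2 x -> l2inner x p - f x <= B) -> Rbar_le (fconj f p) (Finite B).
Proof. intros H. apply (proj2 (Lub_Rbar_correct _)). intros r [x [Hx ->]]. simpl. auto. Qed.

Lemma Rbar_mult_pos_pinfty l : 0 < l -> Rbar_mult (Finite l) p_infty = p_infty.
Proof.
  intros H. unfold Rbar_mult, Rbar_mult'.
  destruct (Rle_dec 0 l) as [Hl|]; [|lra]. destruct (Rle_lt_or_eq_dec 0 l Hl); [reflexivity|lra].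
Qed.

Lemma Lub_Rbar_singleton (E : R -> Prop) a : (forall r, E r <-> r = a) -> Lub_Rbar E = Finite a.
Proof.
  intros H. apply is_lub_Rbar_unique. split.
  - intros r Hr. apply H in Hr. subst. simpl. lra.
  - intros l Hl. now apply Hl, H.
Qed.

Lemma l2_set_closed_in_Rm n : l2_set_closed (in_Rm n).
Proof.
  intros xs x Hxs Hx Hlim k Hk.
  assert (H : is_lim_seq (fun i => xs i k) (x k)).
  { apply is_lim_seq_coord; auto. intros i. apply is_l2_vsub; auto. now apply (in_Rm_is_l2 n). }
  apply (is_lim_seq_ext _ (fun _ => 0)) in H; [|intros i; apply Hxs; auto].
  apply is_lim_seq_unique in H. rewrite Lim_seq_const in H. now injection H.
Qed.

Lemma l2_set_convex_in_Rm n : l2_set_convex (in_Rm n).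
Proof. intros x y l Hx Hy Hl k Hk. unfold vcomb. rewrite Hx, Hy; auto. ring. Qed.

Lemma Rm_set_closed_single m c : Rm_set_closed m (fun p => p = c).
Proof.
  intros ps p Hps Hp Hlim. apply functional_extensionality. intros i.
  specialize (Hlim i). apply (is_lim_seq_ext _ (fun _ => c i)) in Hlim; [|intros n; now rewrite Hps].
  apply is_lim_seq_unique in Hlim. rewrite Lim_seq_const in Hlim. now injection Hlim.
Qed.

Lemma Rm_set_convex_single m c : Rm_set_convex m (fun p => p = c).
Proof. intros p q l -> -> Hl. apply functional_extensionality. intros k. unfold vcomb. ring. Qed.

Lemma proper_Rm_zero m : proper_Rm m (fun _ => Finite 0).
Proof. split; [discriminate|]. exists vzero. split; [now intros k _|reflexivity]. Qed.

Lemma closed_Rm_zero m : closed_Rm m (fun _ => Finite 0).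
Proof.
  intros ps p rs r _ _ _ Hr Hle.
  assert (H : Rbar_le 0 r) by (apply (is_lim_seq_le (fun _ => 0) rs); auto; apply is_lim_seq_const).
  destruct r; simpl in *; lra.
Qed.

Lemma convex_Rm_zero m : convex_Rm m (fun _ => Finite 0).
Proof. intros p q l _ _ Hl. simpl. lra. Qed.

(** * Chain quadratics on the path 0 - 1 - ... - N *)

Section Chain.

Variables (N : nat) (L : R).
Hypothesis HL : 0 <= L.

Definition bounded_weight (W : R) (w : nat -> R) : Prop :=
  (forall k, 0 <= w k <= W) /\ (forall k, (N <= S k)%nat -> w k = 0).

Definition chain_quad (w : nat -> R) (h : vec) : R :=
  / 2 * sumR N (fun k => w k * (h k - h (S k)) ^ 2) + L / 2 * h N ^ 2.

Definition chain_fun (w : nat -> R) (c : R) (x : vec) : R := chain_quad w x - c * x O.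

(* The Hessian of [chain_quad w]: a weighted path Laplacian on [0..N] plus [L] at [N]. *)
Definition chain_op (w : nat -> R) (v : vec) : vec := fun k =>
  w k * (v k - v (S k)) - backshift (fun i => w i * (v i - v (S i))) k
  + (if Nat.eqb k N then L * v N else 0).

Definition chain_grad (w : nat -> R) (c : R) (x : vec) : vec := fun k =>
  chain_op w x k - (if Nat.eqb k O then c else 0).

Variables (w : nat -> R) (W : R).
Hypothesis Hw : bounded_weight W w.

Lemma bounded_weight_nonneg : 0 <= W.
Proof. destruct Hw as [Hpos _]. destruct (Hpos O). lra. Qed.

Lemma chain_op_in_Rm v : in_Rm (S N) (chain_op w v).
Proof.
  destruct Hw as [_ Hend]. intros k Hk. unfold chain_op, backshift.
  destruct k as [|k]; [lia|]. rewrite !Hend by lia.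
  destruct (Nat.eqb_spec (S k) N); [lia|ring].
Qed.

Lemma chain_grad_in_Rm c x : in_Rm (S N) (chain_grad w c x).
Proof.
  intros k Hk. unfold chain_grad. rewrite chain_op_in_Rm by exact Hk.
  destruct (Nat.eqb_spec k O); [lia|ring].
Qed.

Lemma sumR_chain_op v h :
  sumR (S N) (fun k => chain_op w v k * h k) =
  sumR N (fun k => w k * (v k - v (S k)) * (h k - h (S k))) + L * v N * h N.
Proof.
  destruct Hw as [_ Hend]. unfold chain_op.
  rewrite (sumR_ext _ _ (fun k => (w k * (v k - v (S k)) * h k
      - backshift (fun i => w i * (v i - v (S i))) k * h k) + (if Nat.eqb k N then L * v N * h N else 0)))
    by (intros k _; destruct (Nat.eqb_spec k N) as [->|]; ring).
  rewrite sumR_plus, sumR_by_parts, sumR_delta.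
  replace (Nat.ltb N (S N)) with true by (symmetry; apply Nat.ltb_lt; lia).
  simpl sumR at 1. simpl backshift. rewrite (Hend N) by lia. ring.
Qed.

Lemma l2inner_chain_grad c x h : l2inner (chain_grad w c x) h =
  sumR N (fun k => w k * (x k - x (S k)) * (h k - h (S k))) + L * x N * h N - c * h O.
Proof.
  rewrite (l2inner_in_Rm_l (S N)) by apply chain_grad_in_Rm. unfold chain_grad.
  rewrite (sumR_ext _ _ (fun k => chain_op w x k * h k - (if Nat.eqb k O then c * h O else 0)))
    by (intros k _; destruct (Nat.eqb_spec k O) as [->|]; simpl; ring).
  rewrite sumR_minus, sumR_chain_op, sumR_delta. simpl. ring.
Qed.

Lemma chain_fun_expand c x h :
  chain_fun w c (vadd x h) - chain_fun w c x - l2inner (chain_grad w c x) h = chain_quad w h.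
Proof.
  rewrite l2inner_chain_grad. unfold chain_fun, chain_quad, vadd.
  replace (sumR N (fun k => w k * (x k + h k - (x (S k) + h (S k))) ^ 2)) with
    (sumR N (fun k => w k * (x k - x (S k)) ^ 2)
     + 2 * sumR N (fun k => w k * (x k - x (S k)) * (h k - h (S k)))
     + sumR N (fun k => w k * (h k - h (S k)) ^ 2))
    by (rewrite <- sumR_scal, <- !sumR_plus; apply sumR_ext; intros; ring).
  field.
Qed.

Lemma chain_quad_nonneg h : 0 <= chain_quad w h.
Proof.
  destruct Hw as [Hpos _]. unfold chain_quad.
  assert (0 <= sumR N (fun k => w k * (h k - h (S k)) ^ 2)).
  { apply sumR_nonneg. intros k _. pose proof (Hpos k). pose proof (pow2_ge_0 (h k - h (S k))). nra. }
  pose proof (pow2_ge_0 (h N)). nra.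
Qed.

Lemma chain_quad_le h : chain_quad w h <= (2 * W + L) * sumR (S N) (fun k => h k ^ 2).
Proof.
  pose proof bounded_weight_nonneg as HW. destruct Hw as [Hpos _]. unfold chain_quad.
  assert (H1 : sumR N (fun k => w k * (h k - h (S k)) ^ 2) <=
               2 * W * (sumR N (fun k => h k ^ 2) + sumR N (fun k => h (S k) ^ 2))).
  { rewrite <- sumR_plus, <- sumR_scal. apply sumR_le. intros k _. destruct (Hpos k).
    pose proof (pow2_ge_0 (h k - h (S k))). pose proof (pow2_ge_0 (h k + h (S k))).
    assert ((h k - h (S k)) ^ 2 <= 2 * h k ^ 2 + 2 * h (S k) ^ 2) by nra. nra. }
  assert (H2 : sumR N (fun k => h k ^ 2) <= sumR (S N) (fun k => h k ^ 2)).
  { simpl. pose proof (pow2_ge_0 (h N)). lra. }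
  assert (H3 : sumR N (fun k => h (S k) ^ 2) <= sumR (S N) (fun k => h k ^ 2)).
  { rewrite (sumR_succ_l N (fun k => h k ^ 2)). pose proof (pow2_ge_0 (h O)). lra. }
  assert (H4 : h N ^ 2 <= sumR (S N) (fun k => h k ^ 2)).
  { apply (sumR_term_le (S N) (fun k => h k ^ 2)); [intros; apply pow2_ge_0|lia]. }
  nra.
Qed.

Lemma is_gradient_chain_fun c : is_gradient_l2 (chain_fun w c) (chain_grad w c).
Proof.
  intros x Hx. split; [apply (in_Rm_is_l2 (S N)), chain_grad_in_Rm|].
  intros e He. set (K := 2 * W + L + 1).
  pose proof bounded_weight_nonneg as HW.
  assert (HK : 0 < K) by (unfold K; lra).
  exists (e / K). split; [now apply Rdiv_lt_0_compat|].
  intros h Hh Hn. rewrite chain_fun_expand, Rabs_pos_eq by apply chain_quad_nonneg.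
  assert (Hnorm : l2norm2 h = l2norm h * l2norm h)
    by (unfold l2norm; rewrite sqrt_sqrt; auto using l2norm2_nonneg).
  pose proof (sqrt_pos (l2norm2 h)) as Hpos. fold (l2norm h) in Hpos.
  assert (Hq : chain_quad w h <= K * (l2norm h * l2norm h)).
  { rewrite <- Hnorm. eapply Rle_trans; [apply chain_quad_le|].
    pose proof (sumR_sq_le_l2norm2 (S N) h Hh). pose proof (l2norm2_nonneg h Hh).
    cbv beta in *. unfold K. nra. }
  assert (K * l2norm h <= e).
  { apply (Rmult_lt_compat_l K) in Hn; [|exact HK].
    replace (K * (e / K)) with e in Hn by (field; lra). lra. }
  nra.
Qed.

Lemma convex_chain_fun c : convex_fun_l2 (chain_fun w c).
Proof.
  destruct Hw as [Hpos _]. intros x y l _ _ Hl. unfold chain_fun, chain_quad, vcomb.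
  assert (Hsq : forall a u v, 0 <= a ->
            a * (l * u + (1 - l) * v) ^ 2 <= l * (a * u ^ 2) + (1 - l) * (a * v ^ 2)).
  { intros a u v Ha. pose proof (pow2_ge_0 (u - v)).
    assert (0 <= a * (l * (1 - l)) * (u - v) ^ 2) by (apply Rmult_le_pos; [apply Rmult_le_pos|]; nra).
    nra. }
  assert (H1 : sumR N (fun k => w k * (l * x k + (1 - l) * y k - (l * x (S k) + (1 - l) * y (S k))) ^ 2) <=
     l * sumR N (fun k => w k * (x k - x (S k)) ^ 2) + (1 - l) * sumR N (fun k => w k * (y k - y (S k)) ^ 2)).
  { rewrite <- !sumR_scal, <- sumR_plus. apply sumR_le. intros k _.
    replace (l * x k + (1 - l) * y k - (l * x (S k) + (1 - l) * y (S k)))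
      with (l * (x k - x (S k)) + (1 - l) * (y k - y (S k))) by ring.
    apply Hsq, Hpos. }
  pose proof (Hsq (L / 2) (x N) (y N) ltac:(lra)). nra.
Qed.

Lemma chain_op_sq_le v :
  sumR (S N) (fun k => chain_op w v k ^ 2) <= 16 * W ^ 2 * sumR N (fun k => v k ^ 2) + L ^ 2 * v N ^ 2.
Proof.
  destruct Hw as [Hpos Hend].
  destruct (Nat.eq_dec N 0) as [HN0|HN0].
  { unfold chain_op, backshift. rewrite HN0. cbn [sumR Nat.eqb]. rewrite (Hend 0%nat) by lia.
    pose proof (pow2_ge_0 W). lra. }
  set (M := pred N). assert (HM : N = S M) by (unfold M; lia).
  set (A i := w i * (v i - v (S i))).
  assert (HA : A M = 0) by (unfold A; rewrite Hend by lia; ring).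
  assert (Hlast : chain_op w v N = L * v N).
  { unfold chain_op, backshift. rewrite Nat.eqb_refl, HM, (Hend M), (Hend (S M)) by lia. ring. }
  assert (Hop : forall k, (k < N)%nat -> chain_op w v k = A k - backshift A k).
  { intros k Hk. unfold chain_op, A. destruct (Nat.eqb_spec k N); [lia|ring]. }
  assert (Hsq : forall a b, (a - b) ^ 2 <= 2 * a ^ 2 + 2 * b ^ 2)
    by (intros a b; pose proof (pow2_ge_0 (a + b)); nra).
  assert (HAsum : sumR N (fun k => A k ^ 2) = sumR M (fun k => A k ^ 2))
    by (rewrite HM; simpl; rewrite HA; ring).
  assert (Hprv : sumR N (fun k => backshift A k ^ 2) = sumR M (fun k => A k ^ 2))
    by (rewrite HM, sumR_succ_l; simpl; ring).
  pose proof (sumR_weighted_diff_sq M w W v Hpos) as HAv. rewrite <- HM in HAv.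
  change (fun k => (w k * (v k - v (S k))) ^ 2) with (fun k => A k ^ 2) in HAv.
  change (sumR (S N) (fun k => chain_op w v k ^ 2))
    with (sumR N (fun k => chain_op w v k ^ 2) + chain_op w v N ^ 2).
  rewrite Hlast.
  assert (sumR N (fun k => chain_op w v k ^ 2) <=
          2 * sumR N (fun k => A k ^ 2) + 2 * sumR N (fun k => backshift A k ^ 2)).
  { rewrite <- !sumR_scal, <- sumR_plus. apply sumR_le. intros k Hk. rewrite Hop by exact Hk. apply Hsq. }
  replace ((L * v N) ^ 2) with (L ^ 2 * v N ^ 2) by ring.
  lra.
Qed.

Lemma chain_grad_vsub c x y : vsub (chain_grad w c x) (chain_grad w c y) = chain_op w (vsub x y).
Proof.
  apply functional_extensionality. intros k.
  unfold chain_grad, chain_op, vsub, backshift. destruct (Nat.eqb k N), (Nat.eqb k O), k; ring.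
Qed.

Lemma lipschitz_chain_grad c L' : 4 * W <= L' -> L <= L' -> lipschitz_l2 (chain_grad w c) L'.
Proof.
  intros HW HL' x y Hx Hy. set (v := vsub x y).
  assert (Hv : is_l2 v) by now apply is_l2_vsub.
  unfold l2norm. rewrite chain_grad_vsub. fold v.
  rewrite (l2norm2_in_Rm (S N)) by apply chain_op_in_Rm.
  pose proof bounded_weight_nonneg.
  assert (Hsum : sumR (S N) (fun k => chain_op w v k ^ 2) <= L' ^ 2 * l2norm2 v).
  { eapply Rle_trans; [apply chain_op_sq_le|].
    eapply Rle_trans; [|apply Rmult_le_compat_l; [apply pow2_ge_0|apply (sumR_sq_le_l2norm2 (S N)); exact Hv]].
    change (sumR (S N) (fun k => v k ^ 2)) with (sumR N (fun k => v k ^ 2) + v N ^ 2).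
    pose proof (sumR_nonneg N (fun k => v k ^ 2) ltac:(intros; apply pow2_ge_0)).
    pose proof (pow2_ge_0 (v N)).
    assert (16 * W ^ 2 <= L' ^ 2) by nra. assert (L ^ 2 <= L' ^ 2) by nra. nra. }
  rewrite <- (sqrt_pow2 L') by lra. rewrite <- sqrt_mult_alt by apply pow2_ge_0.
  now apply sqrt_le_1_alt.
Qed.

Lemma chain_op_basis : chain_op w (basis N) = fun k => L * basis N k.
Proof.
  destruct Hw as [_ Hend].
  assert (Hedge : forall i, w i * (basis N i - basis N (S i)) = 0).
  { intros i. unfold basis.
    destruct (Nat.eqb_spec i N), (Nat.eqb_spec (S i) N); try (rewrite Hend by lia); ring. }
  apply functional_extensionality. intros k. unfold chain_op. rewrite Hedge.
  destruct k as [|k]; simpl backshift; rewrite ?Hedge; unfold basis; rewrite Nat.eqb_refl;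
    destruct (Nat.eqb _ N); ring.
Qed.

Lemma chain_grad_not_lipschitz c L' : L' < L -> ~ lipschitz_l2 (chain_grad w c) L'.
Proof.
  intros HL' Hlip.
  assert (He : basis N = fun k => 1 * basis N k)
    by (apply functional_extensionality; intros; ring).
  assert (Hz : in_Rm (S N) vzero) by (intros k _; reflexivity).
  assert (Hb : is_l2 (basis N)) by (rewrite He; apply (in_Rm_is_l2 (S N)), in_Rm_scal_basis).
  specialize (Hlip (basis N) vzero Hb (in_Rm_is_l2 _ _ Hz)).
  rewrite chain_grad_vsub in Hlip.
  replace (vsub (basis N) vzero) with (basis N) in Hlip
    by (apply functional_extensionality; intros; unfold vsub, vzero; ring).
  unfold l2norm in Hlip. rewrite chain_op_basis, l2norm2_scal_basis, sqrt_pow2 in Hlip by exact HL.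
  rewrite He, l2norm2_scal_basis, pow1, sqrt_1 in Hlip. lra.
Qed.

Lemma chain_fun_split n c x : (1 <= n)%nat -> w (pred n) = 0 ->
  chain_fun w c x = chain_fun w c (trunc n x) + chain_quad w (vsub x (trunc n x)).
Proof.
  intros Hn Hcut. unfold chain_fun, chain_quad.
  assert (Hsplit : forall k, w k * (x k - x (S k)) ^ 2 =
    w k * (trunc n x k - trunc n x (S k)) ^ 2
    + w k * (vsub x (trunc n x) k - vsub x (trunc n x) (S k)) ^ 2).
  { intros k. unfold trunc, vsub.
    destruct (Nat.ltb_spec k n), (Nat.ltb_spec (S k) n); try lia; try ring.
    replace k with (pred n) by lia. rewrite Hcut. ring. }
  rewrite (sumR_ext _ _ _ (fun k _ => Hsplit k)), sumR_plus.
  replace (trunc n x O) with (x O) by (symmetry; apply trunc_lt; lia).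
  replace (vsub x (trunc n x) O) with 0 by (unfold vsub; rewrite trunc_lt by lia; ring).
  replace (x N ^ 2) with (trunc n x N ^ 2 + vsub x (trunc n x) N ^ 2)
    by (unfold vsub, trunc; destruct (Nat.ltb N n); ring).
  ring.
Qed.

(* Test [x] against [trunc n x + (p k0 / 2K) e_k0]: as [w] vanishes on the edge [(n-1, n)],
   the two pieces do not interact in [chain_fun]. *)
Lemma fconj_chain_trunc n c p F k0 : (1 <= n)%nat -> w (pred n) = 0 -> (n <= k0)%nat ->
  fconj (chain_fun w c) p = Finite F ->
  Rbar_le (fconj (chain_fun w c) (trunc n p))
          (Finite (F - p k0 ^ 2 / (4 * (2 * W + L + 1)))).
Proof.
  intros Hn Hcut Hk0 HF. set (a := p k0). set (K := 2 * W + L + 1).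
  pose proof bounded_weight_nonneg as HW.
  assert (HK : 0 < K) by (unfold K; lra).
  apply fconj_le. intros x Hx.
  set (y k := a / (2 * K) * basis k0 k). set (x' := vadd (trunc n x) y).
  assert (Hy : in_Rm (n + S k0) y) by (apply (in_Rm_le (S k0)); [lia|apply in_Rm_scal_basis]).
  assert (Ht : in_Rm (n + S k0) (trunc n x)) by (apply (in_Rm_le n); [lia|apply trunc_in_Rm]).
  assert (Htx' : trunc n x' = trunc n x).
  { apply functional_extensionality. intros k. unfold x', vadd, y, trunc, basis.
    destruct (Nat.ltb_spec k n), (Nat.eqb_spec k k0); try lia; ring. }
  assert (Hrx' : vsub x' (trunc n x') = y).
  { rewrite Htx'. apply functional_extensionality. intros k. unfold x', vsub, vadd. ring. }
  assert (Hx' : is_l2 x').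
  { apply (in_Rm_is_l2 (n + S k0)). intros k Hk. unfold x', vadd. rewrite Hy, Ht by lia. ring. }
  pose proof (fconj_ge (chain_fun w c) p x' Hx') as Hub. rewrite HF in Hub. simpl in Hub.
  assert (Hinner : l2inner x' p = l2inner x (trunc n p) + a ^ 2 / (2 * K)).
  { unfold x'. rewrite (l2inner_vadd_l (n + S k0)) by assumption. unfold y.
    rewrite l2inner_scal_basis_l. fold a.
    rewrite (l2inner_in_Rm_l n) by apply trunc_in_Rm. rewrite (l2inner_in_Rm_r n) by apply trunc_in_Rm.
    rewrite (sumR_ext n _ (fun k => x k * trunc n p k)) by (intros k Hk; rewrite !trunc_lt by lia; ring).
    field. lra. }
  assert (Hfx' : chain_fun w c x' = chain_fun w c (trunc n x) + chain_quad w y)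
    by (rewrite (chain_fun_split n c x') by assumption; now rewrite Hrx', Htx').
  assert (Hfx : chain_fun w c (trunc n x) <= chain_fun w c x).
  { rewrite (chain_fun_split n c x) by assumption. pose proof (chain_quad_nonneg (vsub x (trunc n x))). lra. }
  assert (Hfy : chain_quad w y <= K * (a / (2 * K)) ^ 2).
  { eapply Rle_trans; [apply chain_quad_le|]. rewrite <- (l2norm2_scal_basis k0). fold y.
    assert (Hyl2 : is_l2 y) by (apply (in_Rm_is_l2 (S k0)), in_Rm_scal_basis).
    pose proof (sumR_sq_le_l2norm2 (S N) y Hyl2). pose proof (l2norm2_nonneg y Hyl2).
    apply Rle_trans with ((2 * W + L) * l2norm2 y); [apply Rmult_le_compat_l; lra|].
    replace (K * l2norm2 y) with ((2 * W + L) * l2norm2 y + l2norm2 y) by (unfold K; ring). lra. }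
  replace (K * (a / (2 * K)) ^ 2) with (a ^ 2 / (4 * K)) in Hfy by (field; lra).
  replace (a ^ 2 / (2 * K)) with (2 * (a ^ 2 / (4 * K))) in Hinner by (field; lra).
  lra.
Qed.

Lemma dual_argmax_in_Rm n c xb pb tau p : (1 <= n)%nat -> w (pred n) = 0 ->
  in_Rm n xb -> in_Rm n pb -> 0 <= tau -> dual_argmax (chain_fun w c) xb pb tau p -> in_Rm n p.
Proof.
  intros Hn Hcut Hxb Hpb Htau [Hp [Hfin Hmax]] k0 Hk0.
  destruct (Req_dec (p k0) 0) as [|Hne]; [assumption|exfalso].
  destruct (fconj (chain_fun w c) p) as [F| |] eqn:HF; try discriminate.
  pose proof (fconj_chain_trunc n c p F k0 Hn Hcut Hk0 HF) as Hconj.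
  specialize (Hmax (trunc n p) (in_Rm_is_l2 _ _ (trunc_in_Rm n p))). unfold dual_obj in Hmax.
  rewrite HF in Hmax. rewrite l2inner_trunc_r in Hmax by exact Hxb.
  assert (Hdist : l2norm2 (vsub (trunc n p) pb) <= l2norm2 (vsub p pb)).
  { rewrite trunc_vsub by exact Hpb. apply l2norm2_trunc_le, is_l2_vsub; [exact Hp|].
    exact (in_Rm_is_l2 _ _ Hpb). }
  assert (Hgap : 0 < p k0 ^ 2 / (4 * (2 * W + L + 1))).
  { pose proof bounded_weight_nonneg.
    apply Rdiv_lt_0_compat; [|lra]. pose proof (pow_nonzero (p k0) 2 Hne). pose proof (pow2_ge_0 (p k0)). lra. }
  destruct (fconj (chain_fun w c) (trunc n p)); simpl in Hconj, Hmax; [|contradiction|contradiction].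
  assert (tau / 2 * l2norm2 (vsub (trunc n p) pb) <= tau / 2 * l2norm2 (vsub p pb))
    by (apply Rmult_le_compat_l; lra).
  lra.
Qed.

End Chain.

(** * The server's regularizer *)

Section Regularizer.

Variables (N : nat) (alpha delta R0 : R).
Hypothesis Halpha : 0 < alpha.
Hypothesis Hdelta : 0 <= delta.
Hypothesis HR0 : 1 <= R0.

Definition reg_quad (x : vec) : R :=
  alpha / 2 * sumR (S N) (fun k => x k ^ 2) + delta / 2 * x (pred N) ^ 2.

Definition reg_box (x : vec) : Prop := in_Rm (S N) x /\ forall k, Rabs (x k) <= R0.

Definition reg_shift : R := (alpha / 2 * INR (S N) + delta / 2) * R0 ^ 2.

(* [closed_l2] reads its limit [r : Rbar] through [real], so for [rs] tending to [p_infty]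
   it demands [u x <= 0]: the regularizer must be nonpositive on its (hence bounded) domain. *)
Definition reg (x : vec) : Rbar :=
  if excluded_middle_informative (reg_box x) then Finite (reg_quad x - reg_shift) else p_infty.

Lemma reg_in x : reg_box x -> reg x = Finite (reg_quad x - reg_shift).
Proof. intros H. unfold reg. destruct (excluded_middle_informative _); tauto. Qed.

Lemma reg_out x : ~ reg_box x -> reg x = p_infty.
Proof. intros H. unfold reg. destruct (excluded_middle_informative _); tauto. Qed.

Lemma reg_box_finite x : is_finite (reg x) -> reg_box x.
Proof.
  intros H. destruct (classic (reg_box x)) as [|Hout]; [assumption|].
  rewrite reg_out in H by exact Hout. discriminate.
Qed.

Lemma reg_box_vzero : reg_box vzero.
Proof. split; [now intros k _|]. intros k. unfold vzero. rewrite Rabs_R0. lra. Qed.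

Lemma reg_box_trunc n x : reg_box x -> reg_box (trunc n x).
Proof.
  intros [Hx Hb]. split; intros k; unfold trunc; destruct (Nat.ltb k n); auto.
  rewrite Rabs_R0. lra.
Qed.

Lemma reg_box_vcomb x y l : reg_box x -> reg_box y -> 0 <= l <= 1 -> reg_box (vcomb l x y).
Proof.
  intros [Hx Hbx] [Hy Hby] Hl. split; [now apply l2_set_convex_in_Rm|].
  intros k. unfold vcomb. eapply Rle_trans; [apply Rabs_triang|].
  rewrite !Rabs_mult, (Rabs_pos_eq l), (Rabs_pos_eq (1 - l)) by lra.
  specialize (Hbx k). specialize (Hby k). nra.
Qed.

Lemma reg_quad_nonneg x : 0 <= reg_quad x.
Proof.
  unfold reg_quad. pose proof (sumR_nonneg (S N) (fun k => x k ^ 2) ltac:(intros; apply pow2_ge_0)).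
  pose proof (pow2_ge_0 (x (pred N))). nra.
Qed.

Lemma reg_quad_le_shift x : reg_box x -> reg_quad x <= reg_shift.
Proof.
  intros [_ Hb]. unfold reg_quad, reg_shift.
  assert (Hsq : forall k, x k ^ 2 <= R0 ^ 2).
  { intros k. rewrite <- (pow2_abs (x k)). pose proof (Rabs_pos (x k)). specialize (Hb k). nra. }
  assert (sumR (S N) (fun k => x k ^ 2) <= INR (S N) * R0 ^ 2)
    by (rewrite <- sumR_const; apply sumR_le; auto).
  specialize (Hsq (pred N)). nra.
Qed.

Lemma reg_quad_trunc_lt n x k0 : reg_box x -> (n <= k0)%nat -> x k0 <> 0 ->
  reg_quad (trunc n x) < reg_quad x.
Proof.
  intros [Hx _] Hk0 Hne. unfold reg_quad.
  assert (Hk0N : (k0 < S N)%nat).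
  { destruct (Nat.lt_ge_cases k0 (S N)) as [|Hge]; [assumption|]. exfalso. now apply Hne, Hx. }
  assert (Hsq : forall k, trunc n x k ^ 2 <= x k ^ 2)
    by (intros k; unfold trunc; destruct (Nat.ltb k n); [lra|simpl; nra]).
  assert (sumR (S N) (fun k => trunc n x k ^ 2) < sumR (S N) (fun k => x k ^ 2)).
  { apply (sumR_lt _ _ _ k0); auto. rewrite trunc_ge by exact Hk0.
    pose proof (pow2_ge_0 (x k0)). pose proof (pow_nonzero (x k0) 2 Hne). simpl. lra. }
  specialize (Hsq (pred N)). nra.
Qed.

Lemma prox_argmin_in_Rm n eta xb x : in_Rm n xb -> 0 < eta ->
  prox_argmin (in_Rm (S N)) reg eta xb x -> in_Rm n x.
Proof.
  intros Hxb Heta [HX [Hfin Hmin]] k0 Hk0.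
  destruct (Req_dec (x k0) 0) as [|Hne]; [assumption|exfalso].
  assert (Hbox : reg_box x) by now apply reg_box_finite.
  assert (Hl2 : is_l2 x) by exact (in_Rm_is_l2 _ _ HX).
  assert (Htbox : reg_box (trunc n x)) by now apply reg_box_trunc.
  specialize (Hmin (trunc n x) (proj1 Htbox)).
  rewrite !reg_in in Hmin by assumption. simpl in Hmin.
  assert (Hdist : l2norm2 (vsub (trunc n x) xb) <= l2norm2 (vsub x xb)).
  { rewrite trunc_vsub by exact Hxb. apply l2norm2_trunc_le, is_l2_vsub; [exact Hl2|].
    exact (in_Rm_is_l2 _ _ Hxb). }
  pose proof (reg_quad_trunc_lt n x k0 Hbox Hk0 Hne).
  assert (eta / 2 * l2norm2 (vsub (trunc n x) xb) <= eta / 2 * l2norm2 (vsub x xb))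
    by (apply Rmult_le_compat_l; lra).
  lra.
Qed.

Lemma reg_quad_vcomb l x y : reg_quad (vcomb l x y) =
  l * reg_quad x + (1 - l) * reg_quad y
  - l * (1 - l) * (alpha / 2 * sumR (S N) (fun k => (x k - y k) ^ 2)
                   + delta / 2 * (x (pred N) - y (pred N)) ^ 2).
Proof.
  unfold reg_quad, vcomb.
  rewrite (sumR_ext _ _ (fun k => l * x k ^ 2 + (1 - l) * y k ^ 2 - l * (1 - l) * (x k - y k) ^ 2))
    by (intros; ring).
  rewrite sumR_minus, sumR_plus, !sumR_scal. ring.
Qed.

Lemma reg_strongly_convex a : a <= alpha -> strongly_convex_l2 reg a.
Proof.
  intros Ha x y l _ _ Hl.
  destruct (classic (reg_box x)) as [Hx|Hx]; [destruct (classic (reg_box y)) as [Hy|Hy]|].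
  - rewrite !reg_in by (auto; apply reg_box_vcomb; auto; lra). simpl.
    rewrite (l2norm2_in_Rm (S N)) by (apply in_Rm_vsub; [apply Hx|apply Hy]).
    rewrite reg_quad_vcomb. unfold vsub.
    set (S2 := sumR (S N) (fun k => (x k - y k) ^ 2)).
    assert (0 <= S2) by (apply sumR_nonneg; intros; apply pow2_ge_0).
    assert (0 <= l * (1 - l)) by (apply Rmult_le_pos; lra).
    pose proof (pow2_ge_0 (x (pred N) - y (pred N))).
    assert (0 <= l * (1 - l) * ((alpha - a) / 2 * S2)) by (apply Rmult_le_pos; [|apply Rmult_le_pos]; lra).
    assert (0 <= l * (1 - l) * (delta / 2 * (x (pred N) - y (pred N)) ^ 2))
      by (apply Rmult_le_pos; [|apply Rmult_le_pos]; lra).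
    nra.
  - rewrite (reg_out y), (reg_in x), Rbar_mult_pos_pinfty by (auto; lra).
    destruct (reg (vcomb l x y)); simpl; auto.
  - rewrite (reg_out x), Rbar_mult_pos_pinfty by (auto; lra).
    destruct (classic (reg_box y)) as [Hy|Hy].
    + rewrite (reg_in y) by exact Hy. destruct (reg (vcomb l x y)); simpl; auto.
    + rewrite (reg_out y), Rbar_mult_pos_pinfty by (auto; lra). destruct (reg (vcomb l x y)); simpl; auto.
Qed.

Lemma reg_box_scal_basis c : Rabs c <= R0 -> reg_box (fun k => c * basis N k).
Proof.
  intros Hc. split; [apply in_Rm_scal_basis|]. intros k. unfold basis.
  destruct (Nat.eqb k N); rewrite ?Rmult_1_r, ?Rmult_0_r, ?Rabs_R0; lra.
Qed.

Hypothesis HN : (1 <= N)%nat.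

Lemma reg_quad_scal_basis c : reg_quad (fun k => c * basis N k) = alpha / 2 * c ^ 2.
Proof.
  unfold reg_quad. rewrite <- (l2norm2_in_Rm (S N)) by apply in_Rm_scal_basis.
  rewrite l2norm2_scal_basis. unfold basis. destruct (Nat.eqb_spec (pred N) N); [lia|ring].
Qed.

Lemma reg_modulus : strong_convexity_modulus reg alpha.
Proof.
  split; [apply reg_strongly_convex; lra|]. intros a Ha Hconv.
  set (v c := fun k => c * basis N k).
  assert (Hmid : vcomb (/ 2) (v 1) (v 0) = v (/ 2))
    by (apply functional_extensionality; intros; unfold v, vcomb; field).
  assert (Hdiff : vsub (v 1) (v 0) = v 1)
    by (apply functional_extensionality; intros; unfold v, vsub; ring).
  assert (Hbox : forall c, 0 <= c <= 1 -> reg_box (v c))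
    by (intros c Hc; apply reg_box_scal_basis; rewrite Rabs_pos_eq; lra).
  specialize (Hconv (v 1) (v 0) (/ 2) (in_Rm_is_l2 _ _ (in_Rm_scal_basis _ _))
                (in_Rm_is_l2 _ _ (in_Rm_scal_basis _ _)) ltac:(lra)).
  rewrite Hmid, Hdiff, !reg_in in Hconv by (apply Hbox; lra). simpl in Hconv.
  unfold v in Hconv. rewrite !reg_quad_scal_basis, l2norm2_scal_basis in Hconv. lra.
Qed.

Lemma reg_closed : closed_l2 reg.
Proof.
  intros xs x rs r Hxs Hx Hlim Hr Hle.
  assert (Hbox : forall n, reg_box (xs n)).
  { intros n. destruct (classic (reg_box (xs n))) as [|Hout]; [assumption|].
    specialize (Hle n). now rewrite reg_out in Hle. }
  assert (Hco : forall k, is_lim_seq (fun n => xs n k) (x k))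
    by (intros k; apply is_lim_seq_coord; auto; intros n; now apply is_l2_vsub).
  assert (Hxbox : reg_box x).
  { split; [apply (l2_set_closed_in_Rm (S N) xs); auto; intros n; apply Hbox|].
    intros k. apply Rabs_le.
    assert (Hb : forall n, - R0 <= xs n k <= R0) by (intros n; apply Rabs_le_between, Hbox).
    split.
    - apply (is_lim_seq_le (fun _ => - R0) (fun n => xs n k) (- R0) (x k)); auto.
      + intros n. apply Hb.
      + apply is_lim_seq_const.
    - apply (is_lim_seq_le (fun n => xs n k) (fun _ => R0) (x k) R0); auto.
      + intros n. apply Hb.
      + apply is_lim_seq_const. }
  rewrite reg_in by exact Hxbox.
  assert (Hq : forall n, reg_quad (xs n) - reg_shift <= rs n).
  { intros n. specialize (Hle n). now rewrite reg_in in Hle by apply Hbox. }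
  assert (Hqlim : is_lim_seq (fun n => reg_quad (xs n) - reg_shift) (reg_quad x - reg_shift)).
  { unfold reg_quad. apply is_lim_seq_minus'; [|apply is_lim_seq_const].
    apply is_lim_seq_plus'; apply is_lim_seq_mult'; try apply is_lim_seq_const.
    - apply (is_lim_seq_sumR (S N) (fun n k => xs n k ^ 2) (fun k => x k ^ 2)).
      intros k _. now apply is_lim_seq_sq.
    - now apply is_lim_seq_sq. }
  pose proof (is_lim_seq_le _ _ _ _ Hq Hqlim Hr).
  pose proof (reg_quad_le_shift x Hxbox).
  destruct r; simpl in *; lra.
Qed.

Lemma reg_proper : proper_l2 reg.
Proof.
  split.
  - intros x _. unfold reg. destruct (excluded_middle_informative _); discriminate.
  - exists vzero. split; [exact (in_Rm_is_l2 _ _ (proj1 reg_box_vzero))|].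
    now rewrite reg_in by exact reg_box_vzero.
Qed.

Lemma reg_quad_expand x h : reg_quad (vadd x h) =
  reg_quad x + alpha * sumR (S N) (fun k => x k * h k) + delta * x (pred N) * h (pred N) + reg_quad h.
Proof.
  unfold reg_quad, vadd.
  rewrite (sumR_ext _ _ (fun k => x k ^ 2 + 2 * (x k * h k) + h k ^ 2)) by (intros; ring).
  rewrite !sumR_plus, sumR_scal. field.
Qed.

End Regularizer.

(** * The hard instance and its minimizer *)

Lemma geometric_telescope alpha beta q M h : alpha * q = beta * (1 - q) ^ 2 ->
  beta * (1 - q) * sumR M (fun k => q ^ k * (h k - h (S k))) + alpha * sumR (S M) (fun k => q ^ k * h k) =
  (beta * (1 - q) + alpha) * h O - beta * (1 - q) * q ^ M * h M.
Proof.
  intros Hq. induction M as [|M IH]; [simpl; ring|].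
  change (sumR (S M) (fun k => q ^ k * (h k - h (S k))))
    with (sumR M (fun k => q ^ k * (h k - h (S k))) + q ^ M * (h M - h (S M))).
  change (sumR (S (S M)) (fun k => q ^ k * h k)) with (sumR (S M) (fun k => q ^ k * h k) + q ^ S M * h (S M)).
  replace (beta * (1 - q) * (sumR M (fun k => q ^ k * (h k - h (S k))) + q ^ M * (h M - h (S M)))
           + alpha * (sumR (S M) (fun k => q ^ k * h k) + q ^ S M * h (S M)))
    with (beta * (1 - q) * sumR M (fun k => q ^ k * (h k - h (S k))) + alpha * sumR (S M) (fun k => q ^ k * h k)
          + beta * (1 - q) * q ^ M * (h M - h (S M)) + (alpha * q) * q ^ M * h (S M)) by (simpl; ring).
  rewrite IH, Hq. simpl. ring.
Qed.

Section Hard_instance.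

Variables (N : nat) (L alpha q : R).
Hypothesis HL : 0 <= L.
Hypothesis Halpha : 0 < alpha.
Hypothesis Hq : 0 < q < 1.

Definition hard_beta : R := alpha * q / (1 - q) ^ 2.
Definition hard_delta : R := hard_beta * (1 - q).
Definition hard_scale : R := / q ^ 2.
Definition hard_lin : R := hard_scale * (hard_delta + alpha).

Definition path_weight (k : nat) : R := if Nat.ltb (S k) N then hard_beta else 0.

Definition worker_weight (j k : nat) : R :=
  if Bool.eqb (Nat.even k) (Nat.eqb j 0) then 2 * path_weight k else 0.
Definition worker_lin (j : nat) : R := if Nat.eqb j 0 then 2 * hard_lin else 0.

Definition hard_f (j : nat) : vec -> R := chain_fun N L (worker_weight j) (worker_lin j).
Definition hard_g (j : nat) : vec -> vec := chain_grad N L (worker_weight j) (worker_lin j).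
Definition hard_u : vec -> Rbar := reg N alpha hard_delta hard_scale.
Definition p_half : vec := fun i => if Nat.ltb i 2 then / 2 else 0.
Definition hard_P (p : vec) : Prop := p = p_half.
Definition hard_rho (p : vec) : Rbar := Finite 0.

Definition xstar : vec := fun k => if Nat.ltb k N then hard_scale * q ^ k else 0.

Lemma hard_beta_nonneg : 0 <= hard_beta.
Proof. unfold hard_beta. apply Rmult_le_pos; [nra|]. apply Rlt_le, Rinv_0_lt_compat, pow_lt. lra. Qed.

Lemma hard_delta_nonneg : 0 <= hard_delta.
Proof. unfold hard_delta. pose proof hard_beta_nonneg. nra. Qed.

Lemma hard_scale_ge1 : 1 <= hard_scale.
Proof.
  unfold hard_scale. rewrite <- Rinv_1. apply Rinv_le_contravar; [apply pow_lt; lra|].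
  rewrite <- (pow1 2). apply pow_incr. lra.
Qed.

Lemma bounded_path_weight : bounded_weight N hard_beta path_weight.
Proof.
  pose proof hard_beta_nonneg. unfold path_weight. split.
  - intros k. destruct (Nat.ltb (S k) N); lra.
  - intros k Hk. destruct (Nat.ltb_spec (S k) N); [lia|reflexivity].
Qed.

Lemma bounded_worker_weight j : bounded_weight N (2 * hard_beta) (worker_weight j).
Proof.
  destruct bounded_path_weight as [Hpos Hend]. unfold worker_weight. split.
  - intros k. destruct (Bool.eqb _ _); destruct (Hpos k); lra.
  - intros k Hk. rewrite Hend by exact Hk. destruct (Bool.eqb _ _); ring.
Qed.

Lemma worker_weight_cut j n : (1 <= n)%nat -> Nat.even n = Nat.eqb j 0 -> worker_weight j (pred n) = 0.
Proof.
  intros Hn Hpar. unfold worker_weight. destruct n as [|k]; [lia|].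
  rewrite Nat.even_succ in Hpar. unfold Nat.odd in Hpar. simpl pred.
  destruct (Nat.even k), (Nat.eqb j 0); simpl in *; congruence.
Qed.

Lemma worker_weight_sum k : worker_weight 1 k = 2 * path_weight k - worker_weight 0 k.
Proof. unfold worker_weight. destruct (Nat.even k); simpl; ring. Qed.

Lemma sumR_p_half_hard_f x :
  sumR 2 (fun i => p_half i * hard_f i x) = chain_fun N L path_weight hard_lin x.
Proof.
  unfold hard_f, chain_fun, chain_quad, worker_lin, p_half. cbn [sumR Nat.ltb Nat.leb Nat.eqb].
  assert (Hsplit : forall d : nat -> R,
    sumR N (fun k => worker_weight 1 k * d k) =
    2 * sumR N (fun k => path_weight k * d k) - sumR N (fun k => worker_weight 0 k * d k)).
  { intros d. rewrite <- sumR_scal, <- sumR_minus. apply sumR_ext. intros k _.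
    rewrite worker_weight_sum. ring. }
  rewrite (Hsplit (fun k => (x k - x (S k)) ^ 2)). field.
Qed.

Lemma hard_objective x :
  objective 2 hard_P hard_rho hard_u hard_f x =
  Rbar_plus (Finite (chain_fun N L path_weight hard_lin x)) (hard_u x).
Proof.
  unfold objective. f_equal. apply Lub_Rbar_singleton. intros r. rewrite <- sumR_p_half_hard_f. split.
  - intros [p [r' [-> [Hr ->]]]]. injection Hr as <-. ring.
  - intros ->. exists p_half, 0. repeat split. ring.
Qed.

Lemma agg_grad_hard : agg_grad 2 hard_g p_half = chain_grad N L path_weight hard_lin.
Proof.
  apply functional_extensionality. intros x. apply functional_extensionality. intros k.
  unfold agg_grad, hard_g, chain_grad, chain_op, worker_lin, p_half.
  destruct (Nat.eqb k N), (Nat.eqb k 0); cbn [sumR Nat.ltb Nat.leb Nat.eqb];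
    destruct k; cbn [backshift]; rewrite !worker_weight_sum; field.
Qed.

Lemma hard_aggregate_smoothness : 4 * hard_beta <= L -> aggregate_smoothness 2 hard_P hard_g L.
Proof.
  intros Hbeta. split.
  - intros p ->. rewrite agg_grad_hard. apply (lipschitz_chain_grad N L HL path_weight hard_beta);
      [apply bounded_path_weight|lra|lra].
  - exists p_half. split; [reflexivity|]. intros L' HL'. rewrite agg_grad_hard.
    exact (chain_grad_not_lipschitz N L HL path_weight hard_beta bounded_path_weight hard_lin L' HL').
Qed.

Lemma in_simplex_p_half : in_simplex 2 p_half.
Proof.
  unfold p_half. split; [|split].
  - intros k Hk. destruct (Nat.ltb_spec k 2); [lia|reflexivity].
  - intros i Hi. destruct (Nat.ltb i 2); lra.
  - cbn. lra.
Qed.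

Lemma hard_smooth_problem : smooth_problem 2 hard_P hard_rho (in_Rm (S N)) hard_u hard_f hard_g.
Proof.
  pose proof hard_delta_nonneg. pose proof hard_scale_ge1. pose proof hard_beta_nonneg.
  refine (conj _ (conj _ (conj _ (conj _ (conj _ (conj _ (conj _ (conj _ (conj _ (conj _ (conj _ (conj _ _)))))))))))).
  - intros p ->. exact in_simplex_p_half.
  - exact (Rm_set_closed_single 2 p_half).
  - exact (Rm_set_convex_single 2 p_half).
  - exact (proper_Rm_zero 2).
  - exact (closed_Rm_zero 2).
  - exact (convex_Rm_zero 2).
  - exact (in_Rm_is_l2 (S N)).
  - exact (l2_set_closed_in_Rm (S N)).
  - exact (l2_set_convex_in_Rm (S N)).
  - apply reg_proper; lra.
  - now apply reg_closed.
  - apply reg_strongly_convex; lra.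
  - intros j _. pose proof (bounded_worker_weight j) as Hw. split; [|split].
    + exact (convex_chain_fun N L HL _ _ Hw _).
    + exact (is_gradient_chain_fun N L HL _ _ Hw _).
    + exists (8 * hard_beta + L). apply (lipschitz_chain_grad N L HL _ _ Hw); lra.
Qed.

Lemma hard_beta_relation : alpha * q = hard_beta * (1 - q) ^ 2.
Proof. unfold hard_beta. field. lra. Qed.

Lemma xstar_lt k : (k < N)%nat -> xstar k = hard_scale * q ^ k.
Proof. intros Hk. unfold xstar. destruct (Nat.ltb_spec k N); [reflexivity|lia]. Qed.

Lemma xstar_in_Rm : in_Rm N xstar.
Proof. intros k Hk. unfold xstar. destruct (Nat.ltb_spec k N); [lia|reflexivity]. Qed.

Lemma xstar_in_box : reg_box N hard_scale xstar.
Proof.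
  split; [apply (in_Rm_le N); [lia|apply xstar_in_Rm]|]. intros k.
  pose proof hard_scale_ge1.
  destruct (Nat.lt_ge_cases k N) as [Hk|Hk].
  - rewrite xstar_lt by exact Hk. rewrite Rabs_pos_eq by (apply Rmult_le_pos; [lra|apply pow_le; lra]).
    assert (q ^ k <= 1) by (rewrite <- (pow1 k); apply pow_incr; lra).
    pose proof (pow_le q k ltac:(lra)). nra.
  - rewrite xstar_in_Rm, Rabs_R0 by exact Hk. lra.
Qed.

Hypothesis HN : (1 <= N)%nat.

Lemma xstar_stationary h :
  l2inner (chain_grad N L path_weight hard_lin xstar) h
  + alpha * sumR (S N) (fun k => xstar k * h k) + hard_delta * xstar (pred N) * h (pred N) = 0.
Proof.
  rewrite (l2inner_chain_grad N L _ hard_beta bounded_path_weight).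
  set (M := pred N). assert (HM : N = S M) by (unfold M; lia).
  assert (Hpw : path_weight M = 0)
    by (unfold path_weight; destruct (Nat.ltb_spec (S M) N); [lia|reflexivity]).
  assert (Hdiff : sumR M (fun k => path_weight k * (xstar k - xstar (S k)) * (h k - h (S k))) =
    hard_scale * (hard_beta * (1 - q) * sumR M (fun k => q ^ k * (h k - h (S k))))).
  { rewrite <- !sumR_scal. apply sumR_ext. intros k Hk.
    unfold path_weight. destruct (Nat.ltb_spec (S k) N); [|lia].
    rewrite !xstar_lt by lia. simpl. ring. }
  assert (Hlin : sumR (S M) (fun k => xstar k * h k) = hard_scale * sumR (S M) (fun k => q ^ k * h k)).
  { rewrite <- sumR_scal. apply sumR_ext. intros k Hk. rewrite xstar_lt by lia. ring. }
  rewrite HM, sumR_S, Hpw, (sumR_S (S M)), (xstar_in_Rm (S M)), Hlin, Hdiff by lia. simpl pred.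
  rewrite xstar_lt by lia.
  set (S1 := sumR M (fun k => q ^ k * (h k - h (S k)))).
  set (S2 := sumR (S M) (fun k => q ^ k * h k)).
  pose proof (geometric_telescope alpha hard_beta q M h hard_beta_relation) as Htel. fold S1 S2 in Htel.
  unfold hard_lin, hard_delta.
  transitivity (hard_scale * ((hard_beta * (1 - q) * S1 + alpha * S2)
    - ((hard_beta * (1 - q) + alpha) * h O - hard_beta * (1 - q) * q ^ M * h M))); [ring|].
  rewrite Htel. ring.
Qed.

Lemma xstar_minimizes y :
  chain_fun N L path_weight hard_lin xstar + reg_quad N alpha hard_delta xstar <=
  chain_fun N L path_weight hard_lin y + reg_quad N alpha hard_delta y.
Proof.
  set (h := vsub y xstar).
  replace y with (vadd xstar h) by (apply functional_extensionality; intros k; unfold h, vadd, vsub; ring).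
  pose proof (chain_fun_expand N L _ _ bounded_path_weight hard_lin xstar h) as Hf.
  rewrite (reg_quad_expand N alpha hard_delta xstar h).
  pose proof (xstar_stationary h).
  pose proof (chain_quad_nonneg N L HL _ _ bounded_path_weight h).
  pose proof (reg_quad_nonneg N alpha hard_delta ltac:(lra) hard_delta_nonneg h).
  lra.
Qed.

Lemma hard_optimal : optimal_solution 2 hard_P hard_rho (in_Rm (S N)) hard_u hard_f xstar.
Proof.
  pose proof xstar_in_box as Hbox.
  split; [apply Hbox|split]; rewrite hard_objective; unfold hard_u; rewrite (reg_in _ _ _ _ xstar Hbox);
    [reflexivity|].
  intros y Hy. rewrite hard_objective. unfold hard_u.
  destruct (classic (reg_box N hard_scale y)) as [Hyb|Hyb].
  - rewrite reg_in by exact Hyb. simpl. pose proof (xstar_minimizes y). lra.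
  - rewrite reg_out by exact Hyb. exact I.
Qed.

End Hard_instance.

(** * Support growth of DPM algorithms on the hard instance *)

Definition frontier (j t : nat) : nat :=
  if Bool.eqb (Nat.even (S t)) (Nat.eqb j 0) then S t else S (S t).

Lemma frontier_bounds j t : (S t <= frontier j t <= S (S t))%nat.
Proof. unfold frontier. destruct (Bool.eqb _ _); lia. Qed.

Lemma frontier_even j t : Nat.even (frontier j t) = Nat.eqb j 0.
Proof.
  unfold frontier. destruct (Bool.eqb (Nat.even (S t)) (Nat.eqb j 0)) eqn:E.
  - now apply Bool.eqb_prop.
  - rewrite Nat.even_succ_succ. rewrite Nat.even_succ in E. unfold Nat.odd in E.
    destruct (Nat.even t), (Nat.eqb j 0); simpl in *; congruence.
Qed.

Definition support_invariant (t : nat) (s : dpm_state) : Prop :=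
  (forall y, srv s y -> in_Rm (S t) y) /\
  (forall j y, (j < 2)%nat -> pmem s j y -> in_Rm (frontier j t) y) /\
  (forall j y, (j < 2)%nat -> dmem s j y -> in_Rm (frontier j t) y).

Section Rounds.

Variables (N : nat) (L alpha q : R).

Hypothesis HL : 0 <= L.
Hypothesis Halpha : 0 < alpha.
Hypothesis Hq : 0 < q < 1.

Lemma reach_support_invariant t s :
  reach 2 (in_Rm (S N)) (hard_u N alpha q) (hard_f N L alpha q) t s -> support_invariant t s.
Proof.
  induction 1 as [| t s s' _ [Isrv [Ipmem Idmem]] Hstep | t s s' _ [Isrv [Ipmem Idmem]] Hstep
                  | t s s' _ [Isrv [Ipmem Idmem]] Hstep].
  - split; [|split]; cbn; intros; subst; intros k _; reflexivity.
  - destruct Hstep as [i [xb [pb [tau [p' [Hi [Hxb [Hpb [Htau [Hd ->]]]]]]]]]].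
    assert (Hxb' : in_Rm (frontier i t) xb) by (apply (in_Rm_span _ (pmem s i)); auto).
    assert (Hpb' : in_Rm (frontier i t) pb) by (apply (in_Rm_span _ (dmem s i)); auto).
    assert (Hn : (1 <= frontier i t)%nat) by (pose proof (frontier_bounds i t); lia).
    assert (Hp' : in_Rm (frontier i t) p').
    { apply (dual_argmax_in_Rm N L HL _ _ (bounded_worker_weight N alpha q Halpha Hq i)
               (frontier i t) (worker_lin alpha q i) xb pb tau); auto.
      apply worker_weight_cut; auto using frontier_even. }
    split; [exact Isrv|split]; cbn; intros j y Hj [Hy|[-> [-> | ->]]]; auto.
  - destruct Hstep as [xb [eta [x' [Hxb [Heta [Hprox ->]]]]]].
    assert (Hx' : in_Rm (S t) x').
    { apply (prox_argmin_in_Rm N alpha (hard_delta alpha q) (hard_scale q) Halpha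
               (hard_delta_nonneg alpha q Halpha Hq) (hard_scale_ge1 q Hq) (S t) eta xb); auto.
      now apply (in_Rm_span _ (srv s)). }
    split; [|split; [exact Ipmem|exact Idmem]]. cbn. intros y [Hy| ->]; auto.
  - destruct Hstep as [v [w [Hv [Hw ->]]]].
    assert (Hsrv : forall y, (srv s y \/ exists j, (j < 2)%nat /\ y = v j) -> in_Rm (S (S t)) y).
    { intros y [Hy|[j [Hj ->]]]; [apply (in_Rm_le (S t)); [lia|auto]|].
      apply (in_Rm_le (frontier j t)); [apply (proj2 (frontier_bounds _ _))|]. apply (in_Rm_span _ (pmem s j)); [intros y Hy; now apply Ipmem|now apply Hv]. }
    assert (Hmono : forall j, (frontier j t <= frontier j (S t))%nat)
      by (intros j; pose proof (frontier_bounds j t); pose proof (frontier_bounds j (S t)); lia).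
    split; [exact Hsrv|split]; cbn.
    + intros j y Hj [Hy|[_ ->]].
      * apply (in_Rm_le (frontier j t)); auto.
      * apply (in_Rm_le (S (S t))); [apply (proj1 (frontier_bounds _ _))|]. now apply (in_Rm_span _ _ _ Hsrv), Hw.
    + intros j y Hj Hy. apply (in_Rm_le (frontier j t)); auto.
Qed.

Lemma dpm_output_in_Rm t x :
  dpm_output 2 (in_Rm (S N)) (hard_u N alpha q) (hard_f N L alpha q) t x -> in_Rm (S (S t)) x.
Proof.
  intros [s [Hreach Hx]]. destruct (reach_support_invariant t s Hreach) as [Isrv [Ipmem _]].
  refine (in_Rm_span _ _ _ _ Hx). intros y [Hy|[i [Hi Hy]]].
  - apply (in_Rm_le (S t)); [lia|auto].
  - apply (in_Rm_le (frontier i t)); [apply (proj2 (frontier_bounds _ _))|]. auto.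
Qed.

Lemma dpm_output_dist_ge t x : (S (S t) < N)%nat ->
  dpm_output 2 (in_Rm (S N)) (hard_u N alpha q) (hard_f N L alpha q) t x ->
  q ^ (2 * t) <= l2norm2 (vsub x (xstar N q)).
Proof.
  intros Ht Hx. apply dpm_output_in_Rm in Hx.
  assert (Hl2 : is_l2 (vsub x (xstar N q))).
  { apply is_l2_vsub; [exact (in_Rm_is_l2 _ _ Hx)|exact (in_Rm_is_l2 _ _ (xstar_in_Rm N q))]. }
  eapply Rle_trans; [|apply (coord_sq_le_l2norm2 _ (S (S t)) Hl2)].
  unfold vsub. rewrite Hx, xstar_lt by lia. unfold hard_scale.
  right. replace (2 * t)%nat with (t + t)%nat by lia. rewrite pow_add. simpl. field. lra.
Qed.

End Rounds.

(** * Counting rounds *)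

Lemma ln_le_sub1 y : 0 < y -> ln y <= y - 1.
Proof. intros Hy. pose proof (exp_ineq1_le (ln y)). rewrite exp_ln in H by exact Hy. lra. Qed.

Lemma rounds_from_contraction s q eps t : 0 <= s -> 0 < q < 1 -> s * (1 / q - 1) <= 25 -> 0 < eps ->
  q ^ (2 * t) <= eps -> / 50 * s * ln (1 / eps) <= INR t.
Proof.
  intros Hs Hq Hrate Heps Hpow.
  assert (Hlog : INR (2 * t) * ln q <= ln eps).
  { rewrite <- ln_pow by lra. destruct (Rle_lt_or_eq_dec _ _ Hpow) as [Hlt| ->]; [|lra].
    left. apply ln_increasing; [apply pow_lt; lra|exact Hlt]. }
  assert (Hinv : - ln q <= 1 / q - 1).
  { pose proof (ln_le_sub1 (1 / q) ltac:(apply Rdiv_lt_0_compat; lra)) as H.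
    unfold Rdiv in *. rewrite Rmult_1_l, ln_Rinv in H by lra. lra. }
  rewrite mult_INR in Hlog. simpl (INR 2) in Hlog.
  assert (Heps' : ln (1 / eps) = - ln eps) by (unfold Rdiv; rewrite Rmult_1_l; apply ln_Rinv; lra).
  pose proof (pos_INR t).
  assert (ln (1 / eps) <= 2 * INR t * (1 / q - 1)) by nra.
  assert (s * ln (1 / eps) <= 2 * INR t * (s * (1 / q - 1))) by nra.
  nra.
Qed.

Lemma rounds_past_horizon s eps n t : 0 <= s -> s * Rabs (ln (1 / eps)) < INR n -> (n <= t)%nat ->
  / 50 * s * ln (1 / eps) <= INR t.
Proof.
  intros Hs Hn Ht. apply le_INR in Ht.
  assert (s * ln (1 / eps) <= s * Rabs (ln (1 / eps))) by (apply Rmult_le_compat_l; [exact Hs|apply Rle_abs]).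
  assert (0 <= s * Rabs (ln (1 / eps))) by (apply Rmult_le_pos; [exact Hs|apply Rabs_pos]).
  lra.
Qed.

Lemma contraction_parameters L alpha : 0 < alpha -> 8 * alpha < L ->
  let s := sqrt (L / alpha) in let q := 1 - 5 / (2 * s) in
  1 / 10 <= q < 1 /\ 4 * hard_beta alpha q <= L /\ s * (1 / q - 1) <= 25.
Proof.
  intros Halpha HL s q.
  assert (Hs2 : s * s = L / alpha) by (apply sqrt_sqrt; apply Rlt_le, Rdiv_lt_0_compat; lra).
  assert (HLs : alpha * (s * s) = L) by (rewrite Hs2; field; lra).
  assert (Hs0 : 0 <= s) by apply sqrt_pos.
  assert (Hss : 8 < s * s) by nra.
  assert (Hs : 25 / 9 <= s) by nra.
  assert (Hq1 : 1 / 10 <= q).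
  { unfold q. assert (5 / (2 * s) <= 9 / 10) by (apply (Rmult_le_reg_r (2 * s)); [lra|]; field_simplify; lra).
    lra. }
  assert (Hq2 : q < 1) by (unfold q; assert (0 < 5 / (2 * s)) by (apply Rdiv_lt_0_compat; lra); lra).
  split; [lra|split].
  - replace (hard_beta alpha q) with (4 * q * L / 25) by (unfold hard_beta, q; rewrite <- HLs; field; lra).
    nra.
  - replace (s * (1 / q - 1)) with (5 / (2 * q)) by (unfold q; field; split; lra).
    apply (Rmult_le_reg_r (2 * q)); [lra|]. field_simplify; lra.
Qed.

Theorem theorem5p3 :
  exists c : R, 0 < c /\
  forall Lf alpha eps : R, 0 < alpha -> 8 * alpha < Lf -> 0 < eps ->
  exists (m : nat) (P : vec -> Prop) (rho : vec -> Rbar) (X : vec -> Prop)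
         (u : vec -> Rbar) (f : nat -> vec -> R) (g : nat -> vec -> vec) (xstar : vec),
    smooth_problem m P rho X u f g /\
    aggregate_smoothness m P g Lf /\
    strong_convexity_modulus u alpha /\
    optimal_solution m P rho X u f xstar /\
    forall (t : nat) (x : vec), dpm_output m X u f t x ->
      l2norm2 (vsub x xstar) <= eps ->
      c * sqrt (Lf / alpha) * ln (1 / eps) <= INR t.
Proof.
  exists (/ 50). split; [lra|]. intros L alpha eps Halpha HL Heps.
  destruct (contraction_parameters L alpha Halpha HL) as [Hq [Hbeta Hrate]].
  set (s := sqrt (L / alpha)) in *. set (q := 1 - 5 / (2 * s)) in *.
  assert (Hq' : 0 < q < 1) by lra. assert (HL0 : 0 <= L) by lra.
  destruct (INR_unbounded (s * Rabs (ln (1 / eps)))) as [n Hn].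
  set (N := S (S n)). assert (HN : (1 <= N)%nat) by (unfold N; lia).
  exists 2%nat, hard_P, hard_rho, (in_Rm (S N)), (hard_u N alpha q), (hard_f N L alpha q),
    (hard_g N L alpha q), (xstar N q).
  split; [now apply hard_smooth_problem|split; [now apply hard_aggregate_smoothness|split]].
  { apply reg_modulus; auto using hard_delta_nonneg, hard_scale_ge1. }
  split; [now apply hard_optimal|]. intros t x Hx Hdist.
  assert (Hs : 0 <= s) by apply sqrt_pos.
  destruct (Nat.lt_ge_cases (S (S t)) N) as [Ht|Ht].
  - apply (rounds_from_contraction s q eps t Hs Hq' Hrate Heps).
    pose proof (dpm_output_dist_ge N L alpha q HL0 Halpha Hq' t x Ht Hx). lra.
  - apply (rounds_past_horizon s eps n t Hs Hn). unfold N in Ht. lia.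
Qed.
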